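(* Let $p$ be an odd prime and $m,r$ positive integers. Then $S_{mp^r-1}\equiv(-1)^{\frac{p-1}{2}}S_{mp^{r-1}-1}\pmod{p^r}$.
   Context: $(S_n)_{n\ge0}$ is the integer sequence defined by $S_0=1$, $S_1=4$ and $(n+1)^2S_{n+1}=4(3n^2+3n+1)S_n-32n^2S_{n-1}$ for $n\ge1$; equivalently $S_n=\sum_{k=0}^n\binom nk\binom{2k}k\binom{2n-2k}{n-k}$. *)

From mathcomp Require Import all_boot all_order all_algebra.
Set Implicit Arguments. Unset Strict Implicit. Unset Printing Implicit Defensive.

Definition S (n : nat) : nat :=
  \sum_(0 <= k < n.+1) 'C(n, k) * 'C(2 * k, k) * 'C(2 * n - 2 * k, n - k).

From mathcomp Require Import all_boot all_order all_algebra.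
From mathcomp Require Import zify ring.
Import GRing.Theory.
Set Implicit Arguments. Unset Strict Implicit. Unset Printing Implicit Defensive.

(* Let h = (p-1)/2, N = m p^r = M p, and write n!_p for the product of the
   integers in [1, n] prime to p, so that n! = p^(n/p) (n/p)! n!_p.  Split
   S_{N-1} = sum_k T(N-1, k), T(n, k) = C(n,k) C(2k,k) C(2n-2k,n-k), according
   to k = i p + s.  If s <> h and j = N-1-k, then for every t <= r one of the
   doublings k + k, j + j carries out of the last t digits in base p, because
   k + j + 1 = 0 mod p^t; by Kummer, p^r divides C(2k,k) C(2j,j).  If s = h,
   then k = i p + h and j = i' p + h with i + i' = M - 1, no carries occur on
   division by p, and the powers of p cancel exactly:
     T(N-1, k) (k!_p j!_p)^3 = T(M-1, i) (N-1)!_p (2k)!_p (2j)!_p.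
   Modulo p^r, which divides N, the reflection t -> N - t gives
   (N-1)!_p = (-1)^h k!_p j!_p, and (2k)!_p (2j)!_p = (2N-1)!_p = ((N-1)!_p)^2,
   whence T(N-1, k) = (-1)^h T(M-1, i). *)

Definition pfree_prod (p a b : nat) : nat := \prod_(a <= t < b | ~~ (p %| t)) t.

(* The factor t = 0 is always dropped, since p %| 0. *)
Definition pfree_fact (p n : nat) : nat := pfree_prod p 0 n.+1.

Lemma pfree_prod_cat p a b c :
  a <= b -> b <= c -> pfree_prod p a c = pfree_prod p a b * pfree_prod p b c.
Proof. by move=> ab bc; rewrite /pfree_prod (big_cat_nat ab bc). Qed.

Lemma pfree_prodSr p a b : a <= b ->
  pfree_prod p a b.+1 = pfree_prod p a b * (if p %| b then 1 else b).
Proof.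
by move=> ab; rewrite /pfree_prod big_mkcond big_nat_recr //= -big_mkcond; case: (p %| b).
Qed.

Lemma pfree_prodSl p a b : a < b ->
  pfree_prod p a b = (if p %| a then 1 else a) * pfree_prod p a.+1 b.
Proof.
by move=> ab; rewrite /pfree_prod big_mkcond big_ltn //= -big_mkcond; case: (p %| a).
Qed.

Lemma pfree_fact0 p : pfree_fact p 0 = 1.
Proof. by rewrite /pfree_fact /pfree_prod big_mkcond big_nat1 dvdn0. Qed.

Lemma pfree_factS p n :
  pfree_fact p n.+1 = pfree_fact p n * (if p %| n.+1 then 1 else n.+1).
Proof. exact: pfree_prodSr. Qed.

Lemma coprime_pfree_prod p a b : prime p -> coprime p (pfree_prod p a b).
Proof.
move=> p_pr; apply: (big_ind (coprime p)) => [|x y|t] //.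
- exact: coprimen1.
- by rewrite coprimeMr => -> ->.
- by rewrite prime_coprime.
Qed.

Lemma fact_pfree_fact p n : 0 < p ->
  n`! = p ^ (n %/ p) * (n %/ p)`! * pfree_fact p n.
Proof.
move=> p_gt0; elim: n => [|n IHn]; first by rewrite div0n pfree_fact0.
rewrite factS IHn pfree_factS divnS //.
case: (boolP (p %| n.+1)) => [/dvdnP[c def_n]|_] /=; last by rewrite add0n; ring.
have := divnS n p_gt0; rewrite def_n mulnK // dvdn_mull // add1n => def_c.
by rewrite def_c factS expnS; ring.
Qed.

Definition S_term (n k : nat) : nat :=
  'C(n, k) * 'C(2 * k, k) * 'C(2 * n - 2 * k, n - k).

Lemma S_term_sum n : S n = \sum_(0 <= k < n.+1) S_term n k.
Proof. by []. Qed.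

Lemma S_termE k j : S_term (k + j) k = 'C(k + j, k) * 'C(2 * k, k) * 'C(2 * j, j).
Proof. by rewrite /S_term -mulnBr !addKn. Qed.

Lemma bin_double_fact n : 'C(2 * n, n) * (n`! * n`!) = (2 * n)`!.
Proof. by have := bin_fact (leq_addr n n); rewrite addnK mul2n -addnn. Qed.

Lemma S_term_fact k j :
  S_term (k + j) k * (k`! * j`!) ^ 3 = (k + j)`! * (2 * k)`! * (2 * j)`!.
Proof.
rewrite S_termE -(bin_fact (leq_addr j k)) addKn -!bin_double_fact; ring.
Qed.

Lemma S_term_pfree_fact p k j : 0 < p ->
  (k + j) %/ p = k %/ p + j %/ p ->
  (2 * k) %/ p = 2 * (k %/ p) -> (2 * j) %/ p = 2 * (j %/ p) ->
  S_term (k + j) k * (pfree_fact p k * pfree_fact p j) ^ 3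
    = S_term (k %/ p + j %/ p) (k %/ p)
      * (pfree_fact p (k + j) * pfree_fact p (2 * k) * pfree_fact p (2 * j)).
Proof.
move=> p_gt0 dkj d2k d2j.
have sq x : p ^ (2 * x) = (p ^ x) ^ 2 by rewrite mulnC expnM.
have E := S_term_fact k j; have E' := S_term_fact (k %/ p) (j %/ p).
rewrite (fact_pfree_fact k p_gt0) (fact_pfree_fact j p_gt0)
  (fact_pfree_fact (k + j) p_gt0) (fact_pfree_fact (2 * k) p_gt0)
  (fact_pfree_fact (2 * j) p_gt0) dkj d2k d2j expnD !sq in E.
set a := k %/ p in E E' *; set b := j %/ p in E E' *.
have P_gt0 : 0 < (p ^ a * p ^ b * (a`! * b`!)) ^ 3.
  by rewrite !(expn_gt0, muln_gt0) p_gt0 !fact_gt0.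
apply/eqP; rewrite -(eqn_pmul2r P_gt0); apply/eqP.
transitivity (S_term (k + j) k *
  (p ^ a * a`! * pfree_fact p k * (p ^ b * b`! * pfree_fact p j)) ^ 3); first ring.
rewrite E; transitivity ((p ^ a * p ^ b) ^ 3 * ((a + b)`! * (2 * a)`! * (2 * b)`!)
  * (pfree_fact p (k + j) * pfree_fact p (2 * k) * pfree_fact p (2 * j))); first ring.
by rewrite -E'; ring.
Qed.

Lemma S_term_pfree_fact_block p h i i' : p = (2 * h).+1 ->
  let k := i * p + h in let j := i' * p + h in
  S_term (k + j) k * (pfree_fact p k * pfree_fact p j) ^ 3
    = S_term (i + i') i
      * (pfree_fact p (k + j) * pfree_fact p (2 * k) * pfree_fact p (2 * j)).
Proof.
move=> def_p k j; have p_gt0 : 0 < p by rewrite def_p.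
have div_block x y : y < p -> (x * p + y) %/ p = x.
  by move=> y_lt; rewrite divnMDl // divn_small ?addn0.
have dk : k %/ p = i by rewrite div_block // def_p; lia.
have dj : j %/ p = i' by rewrite div_block // def_p; lia.
have dkj : (k + j) %/ p = i + i'.
  by rewrite (_ : k + j = (i + i') * p + h.*2) ?div_block // def_p; lia.
have d2 x : (2 * (x * p + h)) %/ p = 2 * x.
  by rewrite (_ : 2 * (x * p + h) = (2 * x) * p + h.*2) ?div_block // def_p; lia.
have := @S_term_pfree_fact p k j p_gt0.
by rewrite dk dj dkj (d2 i) (d2 i'); apply.
Qed.

Lemma logn_fact_bound p n B : prime p -> n < B ->
  logn p n`! = \sum_(1 <= t < B) n %/ p ^ t.
Proof.
move=> p_pr nB; rewrite logn_fact // [RHS](@big_cat_nat _ _ _ n.+1) //=.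
rewrite [X in _ + X]big1_seq ?addn0 // => t; rewrite mem_index_iota.
case/andP=> _ /andP[nt _]; apply: divn_small; apply: leq_trans nt _.
by apply/ltnW/ltn_expl/prime_gt1.
Qed.

Lemma divn_double n d : 0 < d ->
  (2 * n) %/ d = 2 * (n %/ d) + (2 * (n %% d)) %/ d.
Proof. by move=> d_gt0; rewrite {1}(divn_eq n d) mulnDr mulnA divnMDl. Qed.

Lemma logn_bin_double p n B : prime p -> 2 * n < B ->
  logn p 'C(2 * n, n) = \sum_(1 <= t < B) (2 * (n %% p ^ t)) %/ p ^ t.
Proof.
move=> p_pr nB.
have := congr1 (logn p) (bin_double_fact n).
rewrite !lognM ?muln_gt0 ?fact_gt0 ?bin_gt0 ?leq_pmull //.
rewrite !(@logn_fact_bound p _ B) //; last by lia.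
have pt_gt0 t : 0 < p ^ t by rewrite expn_gt0 prime_gt0.
rewrite (eq_bigr _ (fun t _ => divn_double n (pt_gt0 t))).
by rewrite big_split /= -big_distrr /=; lia.
Qed.

Lemma double_mod_carry d k j : d %| k + j + 1 ->
  2 * (k %% d) < d -> 2 * (j %% d) < d -> (2 * (k %% d)).+1 = d.
Proof.
move=> dvd_d hk hj.
have : d %| k %% d + j %% d + 1 by rewrite /dvdn -modnDml modnDm modnDml.
case/dvdnP=> [[|[|c]] def_c]; lia.
Qed.

Lemma modn_half_of_dvdn p h k : p = (2 * h).+1 -> p %| (2 * k).+1 -> k %% p = h.
Proof.
move=> def_p; rewrite {1}(divn_eq k p) -addn1 mulnDr mulnA -addnA dvdn_addr ?dvdn_mull //.
have : k %% p < p by rewrite ltn_mod def_p.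
move: (k %% p) => z z_lt /dvdnP[[|[|c]] def_c]; lia.
Qed.

Lemma double_carry_pos p h d k j : p = (2 * h).+1 -> p %| d ->
  d %| k + j + 1 -> k %% p != h -> 0 < (2 * (k %% d)) %/ d + (2 * (j %% d)) %/ d.
Proof.
move=> def_p pd dvd_d kh.
have d_gt0 : 0 < d by rewrite (dvdn_gt0 _ dvd_d) ?addn1.
case: (ltnP (2 * (k %% d)) d) => [hk|hk]; last by rewrite addn_gt0 divn_gt0 ?hk.
case: (ltnP (2 * (j %% d)) d) => [hj|hj]; last by rewrite addn_gt0 !divn_gt0 ?hj ?orbT.
have : p %| (2 * (k %% d)).+1 by rewrite (double_mod_carry dvd_d hk hj).
by move/(modn_half_of_dvdn def_p)/eqP; rewrite modn_dvdm // (negbTE kh).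
Qed.

Lemma dvdn_bin_double_mul p h r k j : prime p -> p = (2 * h).+1 ->
  p ^ r %| k + j + 1 -> k %% p != h -> p ^ r %| 'C(2 * k, k) * 'C(2 * j, j).
Proof.
move=> p_pr def_p dvd_pr kh.
have bin_gt0 n : 0 < 'C(2 * n, n) by rewrite bin_gt0 leq_pmull.
rewrite pfactor_dvdn // ?muln_gt0 ?bin_gt0 // lognM ?bin_gt0 //.
set B := (2 * (k + j) + r).+1.
rewrite !(@logn_bin_double p _ B) // ?/B; try lia.
rewrite -big_split /= (@big_cat_nat _ _ _ r.+1) //=; last by rewrite /B; lia.
apply: leq_trans (leq_addr _ _).
rewrite -[X in X <= _](subn1 r.+1) -[r.+1 - 1]muln1 -sum_nat_const_nat.
rewrite big_nat_cond [X in _ <= X]big_nat_cond.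
apply: leq_sum => t /andP[/andP[t_gt0 tr] _].
apply: (double_carry_pos def_p _ _ kh).
- by rewrite -(prednK t_gt0) expnS dvdn_mulr.
- by apply: dvdn_trans dvd_pr; rewrite dvdn_exp2l.
Qed.

Lemma dvdn_S_term p h r n k : prime p -> p = (2 * h).+1 ->
  p ^ r %| n.+1 -> k <= n -> k %% p != h -> p ^ r %| S_term n k.
Proof.
move=> p_pr def_p dvd_pr kn kh; rewrite -(subnKC kn) S_termE -mulnA dvdn_mull //.
by apply: (dvdn_bin_double_mul p_pr def_p _ kh); rewrite addn1 subnKC.
Qed.

Local Open Scope ring_scope.

Section PfreeProdModulo.
Variables (R : comPzRingType) (p L : nat).
Hypotheses (L0 : L%:R = 0 :> R) (pL : (p %| L)%N).

Lemma natr_pfree_prod_shift c :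
  (pfree_prod p L (L + c))%:R = (pfree_prod p 0 c)%:R :> R.
Proof.
elim: c => [|c IHc]; first by rewrite addn0 /pfree_prod !big_geq.
rewrite addnS !pfree_prodSr ?leq_addr // !natrM IHc dvdn_addr //.
by case: (p %| c)%N => //; rewrite natrD L0 add0r.
Qed.

Lemma natr_pfree_prod_reflect c : (0 < p)%N -> (c <= L)%N ->
  (pfree_prod p (L - c) L)%:R = (-1) ^+ (c - c %/ p) * (pfree_fact p c)%:R :> R.
Proof.
move=> p_gt0; elim: c => [|c IHc] cL.
  by rewrite subn0 div0n pfree_fact0 /pfree_prod big_geq ?mul1r.
rewrite (@pfree_prodSl p (L - c.+1) L); last by lia.
rewrite (_ : (L - c.+1).+1 = L - c)%N; last by lia.
rewrite natrM IHc ?(ltnW cL) // pfree_factS divnS // (dvdn_subr cL pL).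
have cpc : (c %/ p <= c)%N by apply: leq_div.
case: (p %| c.+1)%N => /=; first by rewrite add1n subSS muln1 mul1r.
rewrite add0n subSn // exprS natrM natrB ?(ltnW cL) // L0 sub0r; ring.
Qed.

Lemma natr_pfree_fact_split k c : (0 < p)%N -> (k + c).+1 = L ->
  (pfree_fact p (k + c))%:R
    = (-1) ^+ (c - c %/ p) * (pfree_fact p k)%:R * (pfree_fact p c)%:R :> R.
Proof.
move=> p_gt0 defL.
rewrite /pfree_fact defL (@pfree_prod_cat p 0 k.+1 L) //; last by lia.
rewrite (_ : k.+1 = L - c)%N; last by lia.
rewrite natrM natr_pfree_prod_reflect //; last by lia.
by rewrite -/(pfree_fact p k); ring.
Qed.

Lemma natr_pfree_fact_double n : n.+1 = L ->
  (pfree_fact p (n + L))%:R = (pfree_fact p n)%:R ^+ 2 :> R.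
Proof.
move=> defL; rewrite /pfree_fact -addSn defL.
rewrite (@pfree_prod_cat p 0 L) ?leq_addr //.
by rewrite natrM natr_pfree_prod_shift expr2.
Qed.

End PfreeProdModulo.

Lemma sign_double_add (R : pzRingType) m n : (-1) ^+ (m.*2 + n)%N = (-1) ^+ n :> R.
Proof. by rewrite -signr_odd oddD odd_double signr_odd. Qed.

Lemma natr_pfree_fact_block (R : comPzRingType) p h i i' :
  p = (2 * h).+1 -> ((i + i').+1 * p)%:R = 0 :> R ->
  let k := (i * p + h)%N in let j := (i' * p + h)%N in
  (pfree_fact p (k + j) * pfree_fact p (2 * k) * pfree_fact p (2 * j))%:R
    = (-1) ^+ h * ((pfree_fact p k * pfree_fact p j) ^ 3)%:R :> R.
Proof.
move=> def_p N0 k j; set N := ((i + i').+1 * p)%N in N0.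
have p_gt0 : (0 < p)%N by rewrite def_p.
have N_def : (k + j).+1 = N by rewrite /N /k /j def_p; lia.
have pN : (p %| N)%N by rewrite dvdn_mull.
have F1 : (pfree_fact p (k + j))%:R
    = (-1) ^+ h * (pfree_fact p k)%:R * (pfree_fact p j)%:R :> R.
  have dj : (j %/ p = i')%N by rewrite divnMDl // divn_small ?addn0 // def_p; lia.
  rewrite (natr_pfree_fact_split N0 pN p_gt0 N_def) dj.
  by rewrite (_ : j - i' = (i' * h).*2 + h)%N ?sign_double_add // /j def_p; lia.
have N2_0 : (N + N)%:R = 0 :> R by rewrite natrD N0 addr0.
have pN2 : (p %| N + N)%N by rewrite dvdn_add.
have d2j1 : ((2 * j).+1 = (2 * i').+1 * p)%N by rewrite /j def_p; ring.
have F2 : (pfree_fact p (2 * k + (2 * j).+1))%:R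
    = (pfree_fact p (2 * k))%:R * (pfree_fact p (2 * j))%:R :> R.
  rewrite (natr_pfree_fact_split N2_0 pN2 p_gt0); last by rewrite -N_def; lia.
  rewrite pfree_factS d2j1 dvdn_mull // muln1 mulnK //.
  rewrite (_ : (2 * i').+1 * p - (2 * i').+1 = ((2 * i').+1 * h).*2)%N; last first.
    by rewrite def_p; lia.
  by rewrite -[X in (-1) ^+ X](addn0) sign_double_add mul1r.
have F3 : (pfree_fact p (2 * k + (2 * j).+1))%:R = (pfree_fact p (k + j))%:R ^+ 2 :> R.
  by rewrite -(natr_pfree_fact_double N0 pN N_def); congr (pfree_fact _ _)%:R; lia.
rewrite !natrM -mulrA -F2 F3 F1.
transitivity (((-1) ^+ h) ^+ 2 *
  ((-1) ^+ h * ((pfree_fact p k)%:R * (pfree_fact p j)%:R) ^+ 3) : R); first ring.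
by rewrite sqrr_sign mul1r.
Qed.

Lemma natr_S_term_block (R : comUnitRingType) p h i i' :
  p = (2 * h).+1 -> ((i + i').+1 * p)%:R = 0 :> R ->
  ((pfree_fact p (i * p + h) * pfree_fact p (i' * p + h))%:R : R) \is a GRing.unit ->
  (S_term (i * p + h + (i' * p + h)) (i * p + h))%:R
    = (-1) ^+ h * (S_term (i + i') i)%:R :> R.
Proof.
move=> def_p N0 U_unit.
have X_unit : (((pfree_fact p (i * p + h) * pfree_fact p (i' * p + h)) ^ 3)%:R : R)
    \is a GRing.unit by rewrite natrX unitrX.
apply: (mulIr X_unit); rewrite -natrM (S_term_pfree_fact_block i i' def_p).
by rewrite natrM (natr_pfree_fact_block def_p N0) mulrCA mulrA.
Qed.

Lemma Zp_intr_eq_modz q (x y : int) : (1 < q)%N ->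
  x%:~R = y%:~R :> 'Z_q -> (x = y %[mod q])%Z.
Proof.
move=> q_gt1 /eqP; rewrite -subr_eq0 -rmorphB /= => z0.
apply/eqP; rewrite eqz_mod_dvd; move: (x - y) z0 => z.
by case: z => n; rewrite ?NegzE ?mulrNz ?oppr_eq0 ?dvdzE /= -?pmulrn
  => /eqP/(congr1 val); rewrite /= val_Zp_nat // => /eqP.
Qed.

Lemma sum_nat_blocks (V : nmodType) M p (F : nat -> V) :
  \sum_(0 <= k < M * p) F k = \sum_(0 <= i < M) \sum_(0 <= s < p) F (i * p + s)%N.
Proof.
rewrite big_nat_mul; apply: eq_bigr => i _.
rewrite -[X in \sum_(X <= _ < _) _]add0n big_addn mulSn addnK.
by under eq_bigr do rewrite addnC.
Qed.

Lemma Zp_natr_eq0 q n : (1 < q)%N -> (q %| n)%N -> n%:R = 0 :> 'Z_q.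
Proof. by move=> q_gt1 /dvdnP[c ->]; rewrite natrM pchar_Zp // mulr0. Qed.

Lemma Zp_sum_S_term_block p h r M i : prime p -> p = (2 * h).+1 -> (0 < r)%N ->
  (p ^ r %| M * p)%N -> (i < M)%N ->
  \sum_(0 <= s < p) (S_term (M * p).-1 (i * p + s))%:R
    = (-1) ^+ h * (S_term M.-1 i)%:R :> 'Z_(p ^ r).
Proof.
move=> p_pr def_p r_gt0 dvd_pr iM.
have q_gt1 : (1 < p ^ r)%N by rewrite -(expn0 p) ltn_exp2l ?prime_gt1.
have p_gt0 := prime_gt0 p_pr.
have Mp_gt0 : (0 < M * p)%N by rewrite muln_gt0 p_gt0 andbT; lia.
rewrite (bigD1_seq h) ?iota_uniq //=; last by rewrite mem_index_iota def_p; lia.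
rewrite big1_seq ?addr0 => [|s /andP[sh]]; last first.
  rewrite mem_index_iota => /andP[_ sp]; apply: Zp_natr_eq0 => //.
  apply: (dvdn_S_term p_pr def_p); rewrite ?prednK ?modnMDl ?modn_small //.
  by rewrite -ltnS prednK //; nia.
set i' := (M.-1 - i)%N.
rewrite (_ : (M * p).-1 = i * p + h + (i' * p + h))%N; last by rewrite /i' def_p; nia.
rewrite (_ : M.-1 = i + i')%N; last by rewrite /i'; lia.
apply: natr_S_term_block => //.
  by apply: Zp_natr_eq0; rewrite // (_ : (i + i').+1 = M)%N // /i'; lia.
by rewrite unitZpE // coprimeXl // coprimeMr !coprime_pfree_prod.
Qed.

Theorem theorem3p3 (p m r : nat) (hp : prime p) (hodd : odd p)
    (hm : (0 < m)%N) (hr : (0 < r)%N) :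
  ((S (m * p ^ r - 1))%:Z
     = (-1) ^+ ((p - 1) %/ 2) * (S (m * p ^ (r - 1) - 1))%:Z
     %[mod (p ^ r)%:Z])%Z.
Proof.
set h := ((p - 1) %/ 2)%N.
have def_p : p = (2 * h).+1 by have := odd_double_half p; rewrite hodd /h; lia.
set M := (m * p ^ (r - 1))%N.
have def_N : (m * p ^ r = M * p)%N by rewrite /M -mulnA -expnSr subn1 prednK.
have p_gt0 := prime_gt0 hp.
have M_gt0 : (0 < M)%N by rewrite muln_gt0 hm expn_gt0 p_gt0.
have Mp_gt0 : (0 < M * p)%N by rewrite muln_gt0 M_gt0.
apply: Zp_intr_eq_modz; first by rewrite -(expn0 p) ltn_exp2l ?prime_gt1.
rewrite rmorphM /= intr_sign -!pmulrn !subn1 def_N !S_term_sum.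
rewrite (prednK M_gt0) (prednK Mp_gt0).
rewrite !natr_sum sum_nat_blocks mulr_sumr; apply: eq_big_nat => i /andP[_ iM].
by apply: Zp_sum_S_term_block; rewrite // -def_N dvdn_mull.
Qed.
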